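(* Let $\lambda_0,\lambda\in\{-1,0,1\}$. Let $M_0$ be a Riemann surface of constant Gauss curvature $K_0=-\lambda_0$ with local complex coordinate $z$, complexified coframe $e_0=\frac{2\,dz}{1+K_0|z|^2}$, spin connection $\Gamma_0=iK_0\frac{z\,d\bar z-\bar z\,dz}{1+K_0|z|^2}$ and Kähler form $\omega_0=\frac{i}{2}e_0\wedge\bar e_0$; let $M$ be a Riemann surface of constant Gauss curvature $K=-\lambda$ with coframe $e$, spin connection $\Gamma$ given by the same formulas with $K$ in place of $K_0$, and let $\hat A=-\Gamma t_0+\frac i2(e\,t_--\bar e\,t_+)$. Let $f:M_0\to M$ be holomorphic, and define a complex function $\phi$ and a real one-form $a$ on $M_0$ by $f^*e=\phi\, e_0$ and $a=f^*\Gamma-\Gamma_0$. Then $$f^*\hat A=-(a+\Gamma_0)\,t_0+\frac{i}{2}\left(\phi\, e_0\, t_- -\bar\phi\,\bar e_0\, t_+\right),$$ and, for a complex function $\phi$ and real one-form $a$ on $M_0$, the $\mathrm{Lie}(\mathbb{H}^1_\lambda)$-valued connection $-(a+\Gamma_0)t_0+\frac{i}{2}(\phi e_0 t_--\bar\phi\bar e_0 t_+)$ is flat if and only if $(\phi,a)$ satisfies the $(\lambda_0,\lambda)$ vortex equations $$(d\phi-ia\phi)\wedge e_0=0,\qquad da=(\lambda_0-\lambda|\phi|^2)\,\omega_0 .$$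
   Context: $\mathbb{H}^1_\lambda$ is the matrix group $\left\{\begin{pmatrix} z_1&\lambda\bar z_2\\ z_2&\bar z_1\end{pmatrix}: |z_1|^2-\lambda|z_2|^2=1\right\}$ with Lie algebra basis $t_0=-\frac{i}{2}\begin{pmatrix}1&0\\0&-1\end{pmatrix}$, $t_1=-\frac{i}{2}\begin{pmatrix}0&-\lambda\\1&0\end{pmatrix}$, $t_2=\frac12\begin{pmatrix}0&\lambda\\1&0\end{pmatrix}$, $t_\pm=t_1\pm it_2$. Flatness of a Lie-algebra-valued one-form $B$ means $dB+B\wedge B=0$. *)

From Stdlib Require Import Reals.
From Coquelicot Require Import Coquelicot.
Open Scope R_scope.

Record M2 := mkM2 { m11 : C; m12 : C; m21 : C; m22 : C }.

Definition M2zero : M2 := mkM2 0%C 0%C 0%C 0%C.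
Definition M2add (A B : M2) : M2 :=
  mkM2 (m11 A + m11 B)%C (m12 A + m12 B)%C (m21 A + m21 B)%C (m22 A + m22 B)%C.
Definition M2scal (c : C) (A : M2) : M2 :=
  mkM2 (c * m11 A)%C (c * m12 A)%C (c * m21 A)%C (c * m22 A)%C.
Definition M2opp (A : M2) : M2 := M2scal (-1)%C A.
Definition M2sub (A B : M2) : M2 := M2add A (M2opp B).
Definition M2mul (A B : M2) : M2 :=
  mkM2 (m11 A * m11 B + m12 A * m21 B)%C (m11 A * m12 B + m12 A * m22 B)%C
       (m21 A * m11 B + m22 A * m21 B)%C (m21 A * m12 B + m22 A * m22 B)%C.

(** * Basis of Lie(H^1_lambda) *)
Definition t0 (l : R) : M2 := M2scal (- (Ci / 2))%C (mkM2 1%C 0%C 0%C (-1)%C).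
Definition t1 (l : R) : M2 := M2scal (- (Ci / 2))%C (mkM2 0%C (RtoC (- l)) 1%C 0%C).
Definition t2 (l : R) : M2 := M2scal (/ 2)%C (mkM2 0%C (RtoC l) 1%C 0%C).
Definition tplus (l : R) : M2 := M2add (t1 l) (M2scal Ci (t2 l)).
Definition tminus (l : R) : M2 := M2sub (t1 l) (M2scal Ci (t2 l)).

Definition px (g : C -> C) (z : C) : C :=
  (Derive (fun t => Re (g (t, Im z))) (Re z), Derive (fun t => Im (g (t, Im z))) (Re z)).
Definition py (g : C -> C) (z : C) : C :=
  (Derive (fun t => Re (g (Re z, t))) (Im z), Derive (fun t => Im (g (Re z, t))) (Im z)).
Definition pxM (g : C -> M2) (z : C) : M2 :=
  mkM2 (px (fun w => m11 (g w)) z) (px (fun w => m12 (g w)) z)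
       (px (fun w => m21 (g w)) z) (px (fun w => m22 (g w)) z).
Definition pyM (g : C -> M2) (z : C) : M2 :=
  mkM2 (py (fun w => m11 (g w)) z) (py (fun w => m12 (g w)) z)
       (py (fun w => m21 (g w)) z) (py (fun w => m22 (g w)) z).

Definition has_partials_on (U : C -> Prop) (g : C -> C) : Prop :=
  forall z, U z ->
    ex_derive (fun t => Re (g (t, Im z))) (Re z) /\
    ex_derive (fun t => Im (g (t, Im z))) (Re z) /\
    ex_derive (fun t => Re (g (Re z, t))) (Im z) /\
    ex_derive (fun t => Im (g (Re z, t))) (Im z).

(** * Differential forms on a planar coordinate domain.
    A 1-form is  fdx * dx + fdy * dy ; a 2-form is given by its coefficient
    of dx /\ dy (a function C -> V). *)
Record form1 (V : Type) := mkF { fdx : C -> V; fdy : C -> V }.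
Arguments mkF {V} _ _.
Arguments fdx {V} _ _.
Arguments fdy {V} _ _.

Definition cform := form1 C.
Definition mform := form1 M2.

Definition dz : cform := @mkF C (fun _ => 1%C) (fun _ => Ci).
Definition dzbar : cform := @mkF C (fun _ => 1%C) (fun _ => (- Ci)%C).
Definition cadd (a b : cform) : cform :=
  @mkF C (fun z => fdx a z + fdx b z)%C (fun z => fdy a z + fdy b z)%C.
Definition copp (a : cform) : cform :=
  @mkF C (fun z => - fdx a z)%C (fun z => - fdy a z)%C.
Definition csub (a b : cform) : cform := cadd a (copp b).
Definition fmul (g : C -> C) (a : cform) : cform :=
  @mkF C (fun z => g z * fdx a z)%C (fun z => g z * fdy a z)%C.
Definition cconj (a : cform) : cform :=
  @mkF C (fun z => Cconj (fdx a z)) (fun z => Cconj (fdy a z)).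
Definition dfun (g : C -> C) : cform := @mkF C (px g) (py g).
Definition d1 (a : cform) (z : C) : C := (px (fdy a) z - py (fdx a) z)%C.
Definition wedge (a b : cform) (z : C) : C :=
  (fdx a z * fdy b z - fdy a z * fdx b z)%C.
Definition rform (ax ay : C -> R) : cform :=
  @mkF C (fun z => RtoC (ax z)) (fun z => RtoC (ay z)).

Definition ftimesM (a : cform) (T : M2) : mform :=
  @mkF M2 (fun z => M2scal (fdx a z) T) (fun z => M2scal (fdy a z) T).
Definition madd (A B : mform) : mform :=
  @mkF M2 (fun z => M2add (fdx A z) (fdx B z)) (fun z => M2add (fdy A z) (fdy B z)).
Definition mscal (c : C) (A : mform) : mform :=
  @mkF M2 (fun z => M2scal c (fdx A z)) (fun z => M2scal c (fdy A z)).
Definition msub (A B : mform) : mform := madd A (mscal (-1)%C B).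
Definition dM (A : mform) (z : C) : M2 := M2sub (pxM (fdy A) z) (pyM (fdx A) z).
Definition wedgeM (A B : mform) (z : C) : M2 :=
  M2sub (M2mul (fdx A z) (fdy B z)) (M2mul (fdy A z) (fdx B z)).

Definition flat_on (U : C -> Prop) (B : mform) : Prop :=
  forall z, U z -> M2add (dM B z) (wedgeM B B z) = M2zero.

Definition cform_eq_on (U : C -> Prop) (a b : cform) : Prop :=
  forall z, U z -> fdx a z = fdx b z /\ fdy a z = fdy b z.
Definition mform_eq_on (U : C -> Prop) (A B : mform) : Prop :=
  forall z, U z -> fdx A z = fdx B z /\ fdy A z = fdy B z.

(** Pullback of forms by a (real-differentiable) map f : C -> C, viewed as
    a map (x,y) |-> (Re f, Im f). *)
Definition pull (f : C -> C) (a : cform) : cform :=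
  @mkF C (fun z => fdx a (f z) * RtoC (Re (px f z)) + fdy a (f z) * RtoC (Im (px f z)))%C
      (fun z => fdx a (f z) * RtoC (Re (py f z)) + fdy a (f z) * RtoC (Im (py f z)))%C.
Definition pullM (f : C -> C) (A : mform) : mform :=
  @mkF M2 (fun z => M2add (M2scal (RtoC (Re (px f z))) (fdx A (f z)))
                      (M2scal (RtoC (Im (px f z))) (fdy A (f z))))
      (fun z => M2add (M2scal (RtoC (Re (py f z))) (fdx A (f z)))
                      (M2scal (RtoC (Im (py f z))) (fdy A (f z)))).

Definition confac (K : R) (z : C) : R := 1 + K * (Cmod z) ^ 2.
Definition coframe (K : R) : cform :=
  fmul (fun z => RtoC (2 / confac K z)) dz.
Definition spin (K : R) : cform :=
  fmul (fun z => (Ci * RtoC K / RtoC (confac K z))%C)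
       (csub (fmul (fun z => z) dzbar) (fmul Cconj dz)).
Definition kahler (K : R) (z : C) : C :=
  (Ci / 2 * wedge (coframe K) (cconj (coframe K)) z)%C.

Definition Ahat (l : R) : mform :=
  madd (ftimesM (copp (spin (- l))) (t0 l))
       (mscal (Ci / 2)%C (msub (ftimesM (coframe (- l)) (tminus l))
                               (ftimesM (cconj (coframe (- l))) (tplus l)))).

Definition vortex_conn (l0 l : R) (a : cform) (phi : C -> C) : mform :=
  madd (ftimesM (copp (cadd a (spin (- l0)))) (t0 l))
       (mscal (Ci / 2)%C
          (msub (ftimesM (fmul phi (coframe (- l0))) (tminus l))
                (ftimesM (fmul (fun z => Cconj (phi z)) (cconj (coframe (- l0)))) (tplus l)))).

Definition vortex_eqs (U : C -> Prop) (l0 l : R) (phi : C -> C) (a : cform) : Prop :=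
  forall z, U z ->
    wedge (csub (dfun phi) (fmul (fun w => (Ci * phi w)%C) a)) (coframe (- l0)) z = 0%C /\
    d1 a z = (RtoC (l0 - l * (Cmod (phi z)) ^ 2) * kahler (- l0) z)%C.

Definition holomorphic_on (U : C -> Prop) (f : C -> C) : Prop :=
  forall z, U z -> @ex_derive C_AbsRing C_NormedModule f z.

Definition unit_val (l : R) : Prop := l = -1 \/ l = 0 \/ l = 1.

From Pilot Require Import Defs.
From Stdlib Require Import Reals Lra.
From Coquelicot Require Import Coquelicot.
Open Scope R_scope.

(** The connection [B = -A t0 + (i/2)(E t_- - Ē t_+)] is the matrix
    [[iA/2, λĒ/2], [E/2, -iA/2]].  When [A] is real, its curvature [dB + B∧B] has the
    same shape, with [A] replaced by [dA + λ (i/2) E∧Ē] and [E] by [dE - i A∧E], so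
    flatness amounts to two scalar equations.  For [A = a + Γ0] and [E = φ e0], Cartan's
    structure equations [de0 = i Γ0∧e0] and [dΓ0 = K0 ω0] of the constant-curvature
    metric turn them into the two vortex equations.  The pull-back identity is pointwise
    linear algebra: pulling back commutes with the fixed matrix pattern of [B]. *)

Definition ex_derive_C (h : R -> C) (t : R) : Prop :=
  ex_derive (fun s => Re (h s)) t /\ ex_derive (fun s => Im (h s)) t.

Definition Derive_C (h : R -> C) (t : R) : C :=
  (Derive (fun s => Re (h s)) t, Derive (fun s => Im (h s)) t).

Lemma ex_derive_Rminus (f g : R -> R) (t : R) :
  ex_derive f t -> ex_derive g t -> ex_derive (fun s => f s - g s) t.
Proof. exact (ex_derive_minus (K := R_AbsRing) (V := R_NormedModule) f g t). Qed.

Lemma ex_derive_Rplus (f g : R -> R) (t : R) :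
  ex_derive f t -> ex_derive g t -> ex_derive (fun s => f s + g s) t.
Proof. exact (ex_derive_plus (K := R_AbsRing) (V := R_NormedModule) f g t). Qed.

Lemma ex_derive_C_ext (h g : R -> C) (t : R) :
  (forall s, h s = g s) -> ex_derive_C h t -> ex_derive_C g t.
Proof.
  intros Hhg [Hre Him]; split.
  - apply (ex_derive_ext (fun s => Re (h s))); [intro s; now rewrite Hhg | exact Hre].
  - apply (ex_derive_ext (fun s => Im (h s))); [intro s; now rewrite Hhg | exact Him].
Qed.

Lemma ex_derive_C_const (c : C) (t : R) : ex_derive_C (fun _ => c) t.
Proof.
  split; [exact (ex_derive_const (K := R_AbsRing) (V := R_NormedModule) (Re c) t)
         |exact (ex_derive_const (K := R_AbsRing) (V := R_NormedModule) (Im c) t)].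
Qed.

Lemma ex_derive_C_mult (h g : R -> C) (t : R) :
  ex_derive_C h t -> ex_derive_C g t -> ex_derive_C (fun s => (h s * g s)%C) t.
Proof.
  intros [Hh1 Hh2] [Hg1 Hg2]; split; simpl.
  - apply ex_derive_Rminus; apply ex_derive_mult; assumption.
  - apply ex_derive_Rplus; apply ex_derive_mult; assumption.
Qed.

Lemma ex_derive_C_RtoC (r : R -> R) (t : R) :
  ex_derive r t -> ex_derive_C (fun s => RtoC (r s)) t.
Proof.
  intro Hr; split; [exact Hr | exact (ex_derive_const (K := R_AbsRing) (V := R_NormedModule) 0 t)].
Qed.

Lemma Derive_C_ext (h g : R -> C) (t : R) :
  (forall s, h s = g s) -> Derive_C h t = Derive_C g t.
Proof.
  intro Hhg; unfold Derive_C.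
  f_equal; apply Derive_ext; intro s; now rewrite Hhg.
Qed.

Lemma Derive_C_plus (h g : R -> C) (t : R) :
  ex_derive_C h t -> ex_derive_C g t ->
  Derive_C (fun s => (h s + g s)%C) t = (Derive_C h t + Derive_C g t)%C.
Proof.
  intros [Hh1 Hh2] [Hg1 Hg2]; unfold Derive_C; simpl.
  now rewrite !Derive_plus.
Qed.

Lemma Derive_C_mult (h g : R -> C) (t : R) :
  ex_derive_C h t -> ex_derive_C g t ->
  Derive_C (fun s => (h s * g s)%C) t = (Derive_C h t * g t + h t * Derive_C g t)%C.
Proof.
  intros [Hh1 Hh2] [Hg1 Hg2]; unfold Derive_C, Re, Im in *; simpl.
  rewrite Derive_minus, Derive_plus by (apply ex_derive_mult; assumption).
  rewrite !Derive_mult by assumption.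
  apply injective_projections; simpl; ring.
Qed.

(* A real or purely imaginary factor does not mix real and imaginary parts, so no
   differentiability is needed. *)
Lemma Derive_C_scal_R (r : R) (h : R -> C) (t : R) :
  Derive_C (fun s => (RtoC r * h s)%C) t = (RtoC r * Derive_C h t)%C.
Proof.
  unfold Derive_C, Re, Im; simpl.
  rewrite (Derive_ext (fun s => r * fst (h s) - 0 * snd (h s)) (fun s => r * fst (h s)))
    by (intro; ring).
  rewrite (Derive_ext (fun s => r * snd (h s) + 0 * fst (h s)) (fun s => r * snd (h s)))
    by (intro; ring).
  rewrite !Derive_scal.
  apply injective_projections; simpl; ring.
Qed.

Lemma Derive_C_scal_Ci (h : R -> C) (t : R) :
  Derive_C (fun s => (Ci * h s)%C) t = (Ci * Derive_C h t)%C.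
Proof.
  unfold Derive_C, Re, Im; simpl.
  rewrite (Derive_ext (fun s => 0 * fst (h s) - 1 * snd (h s)) (fun s => - snd (h s)))
    by (intro; ring).
  rewrite (Derive_ext (fun s => 0 * snd (h s) + 1 * fst (h s)) (fun s => fst (h s)))
    by (intro; ring).
  rewrite Derive_opp.
  apply injective_projections; simpl; ring.
Qed.

Lemma Derive_C_conj (h : R -> C) (t : R) :
  Derive_C (fun s => Cconj (h s)) t = Cconj (Derive_C h t).
Proof. unfold Derive_C; simpl; now rewrite Derive_opp. Qed.

Lemma Derive_C_RtoC (r : R -> R) (t : R) :
  Derive_C (fun s => RtoC (r s)) t = RtoC (Derive r t).
Proof. unfold Derive_C; simpl; now rewrite Derive_const. Qed.

Definition partials_at (g : C -> C) (z : C) : Prop :=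
  ex_derive_C (fun t => g (t, Im z)) (Re z) /\ ex_derive_C (fun t => g (Re z, t)) (Im z).

Definition form_partials_at (a : cform) (z : C) : Prop :=
  partials_at (fdx a) z /\ partials_at (fdy a) z.

Lemma has_partials_on_at (U : C -> Prop) (g : C -> C) (z : C) :
  has_partials_on U g -> U z -> partials_at g z.
Proof. intros Hg Hz; destruct (Hg z Hz) as (? & ? & ? & ?); split; split; assumption. Qed.

Lemma partials_at_ext (g h : C -> C) (z : C) :
  (forall w, g w = h w) -> partials_at g z -> partials_at h z.
Proof.
  intros Hgh [Hx Hy]; split; [apply (ex_derive_C_ext _ _ _ (fun t => Hgh (t, Im z)))
                             |apply (ex_derive_C_ext _ _ _ (fun t => Hgh (Re z, t)))]; assumption.
Qed.

Lemma partials_at_const (c : C) (z : C) : partials_at (fun _ => c) z.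
Proof. split; apply ex_derive_C_const. Qed.

Lemma partials_at_mult (g h : C -> C) (z : C) :
  partials_at g z -> partials_at h z -> partials_at (fun w => (g w * h w)%C) z.
Proof. intros [Hgx Hgy] [Hhx Hhy]; split; apply ex_derive_C_mult; assumption. Qed.

Lemma px_ext (g h : C -> C) (z : C) : (forall w, g w = h w) -> px g z = px h z.
Proof. intro Hgh; exact (Derive_C_ext _ _ _ (fun t => Hgh (t, Im z))). Qed.

Lemma py_ext (g h : C -> C) (z : C) : (forall w, g w = h w) -> py g z = py h z.
Proof. intro Hgh; exact (Derive_C_ext _ _ _ (fun t => Hgh (Re z, t))). Qed.

Lemma pxM_ext (g h : C -> M2) (z : C) : (forall w, g w = h w) -> pxM g z = pxM h z.
Proof. intro Hgh; unfold pxM; f_equal; apply px_ext; intro w; now rewrite Hgh. Qed.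

Lemma pyM_ext (g h : C -> M2) (z : C) : (forall w, g w = h w) -> pyM g z = pyM h z.
Proof. intro Hgh; unfold pyM; f_equal; apply py_ext; intro w; now rewrite Hgh. Qed.

Lemma px_plus (g h : C -> C) (z : C) : partials_at g z -> partials_at h z ->
  px (fun w => (g w + h w)%C) z = (px g z + px h z)%C.
Proof. intros [Hg _] [Hh _]; exact (Derive_C_plus _ _ _ Hg Hh). Qed.

Lemma py_plus (g h : C -> C) (z : C) : partials_at g z -> partials_at h z ->
  py (fun w => (g w + h w)%C) z = (py g z + py h z)%C.
Proof. intros [_ Hg] [_ Hh]; exact (Derive_C_plus _ _ _ Hg Hh). Qed.

Lemma px_mult (g h : C -> C) (z : C) : partials_at g z -> partials_at h z ->
  px (fun w => (g w * h w)%C) z = (px g z * h z + g z * px h z)%C.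
Proof. destruct z; intros [Hg _] [Hh _]; exact (Derive_C_mult _ _ _ Hg Hh). Qed.

Lemma py_mult (g h : C -> C) (z : C) : partials_at g z -> partials_at h z ->
  py (fun w => (g w * h w)%C) z = (py g z * h z + g z * py h z)%C.
Proof. destruct z; intros [_ Hg] [_ Hh]; exact (Derive_C_mult _ _ _ Hg Hh). Qed.

Lemma px_scal_R (r : R) (g : C -> C) (z : C) :
  px (fun w => (RtoC r * g w)%C) z = (RtoC r * px g z)%C.
Proof. apply Derive_C_scal_R. Qed.

Lemma py_scal_R (r : R) (g : C -> C) (z : C) :
  py (fun w => (RtoC r * g w)%C) z = (RtoC r * py g z)%C.
Proof. apply Derive_C_scal_R. Qed.

Lemma px_scal_Ci (g : C -> C) (z : C) : px (fun w => (Ci * g w)%C) z = (Ci * px g z)%C.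
Proof. apply Derive_C_scal_Ci. Qed.

Lemma py_scal_Ci (g : C -> C) (z : C) : py (fun w => (Ci * g w)%C) z = (Ci * py g z)%C.
Proof. apply Derive_C_scal_Ci. Qed.

Lemma px_conj (g : C -> C) (z : C) : px (fun w => Cconj (g w)) z = Cconj (px g z).
Proof. apply Derive_C_conj. Qed.

Lemma py_conj (g : C -> C) (z : C) : py (fun w => Cconj (g w)) z = Cconj (py g z).
Proof. apply Derive_C_conj. Qed.

(* [Defs.d1] is qualified because Coquelicot also exports a [d1]. *)
Lemma d1_cadd (a b : cform) (z : C) : form_partials_at a z -> form_partials_at b z ->
  Defs.d1 (cadd a b) z = (Defs.d1 a z + Defs.d1 b z)%C.
Proof.
  intros [Hax Hay] [Hbx Hby]; unfold Defs.d1; simpl.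
  rewrite (px_plus (fdy a) (fdy b)), (py_plus (fdx a) (fdx b)) by assumption; ring.
Qed.

Lemma d1_fmul (g : C -> C) (a : cform) (z : C) : partials_at g z -> form_partials_at a z ->
  Defs.d1 (fmul g a) z = (wedge (dfun g) a z + g z * Defs.d1 a z)%C.
Proof.
  intros Hg [Hax Hay]; unfold Defs.d1, wedge; simpl.
  rewrite (px_mult g (fdy a)), (py_mult g (fdx a)) by assumption; ring.
Qed.

Lemma confac_pair (K x y : R) : confac K (x, y) = 1 + K * (x ^ 2 + y ^ 2).
Proof.
  unfold confac, Cmod; simpl Re; simpl Im.
  rewrite pow2_sqrt; [reflexivity | nra].
Qed.

Lemma Cinv_RtoC (r : R) : Cinv (RtoC r) = RtoC (/ r).
Proof.
  destruct (Req_dec r 0) as [-> | Hr].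
  - rewrite Rinv_0; apply injective_projections; simpl; unfold Rdiv; rewrite ?Rinv_0; ring.
  - apply injective_projections; simpl; field; exact Hr.
Qed.

Definition over_confac (K p q b : R) (w : C) : R := (p * Re w + q * Im w + b) / confac K w.

Lemma is_derive_over_confac_x (K p q b x y : R) (c := confac K (x, y)) : c <> 0 ->
  is_derive (fun t => over_confac K p q b (t, y)) x
    ((p * c - (p * x + q * y + b) * (2 * K * x)) / c ^ 2).
Proof.
  unfold c; rewrite confac_pair; intro Hc.
  apply (is_derive_ext (fun t => (p * t + q * y + b) / (1 + K * (t ^ 2 + y ^ 2)))).
  { intro t; unfold over_confac; now rewrite confac_pair. }
  auto_derive; [exact Hc | field; exact Hc].
Qed.

Lemma is_derive_over_confac_y (K p q b x y : R) (c := confac K (x, y)) : c <> 0 ->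
  is_derive (fun t => over_confac K p q b (x, t)) y
    ((q * c - (p * x + q * y + b) * (2 * K * y)) / c ^ 2).
Proof.
  unfold c; rewrite confac_pair; intro Hc.
  apply (is_derive_ext (fun t => (p * x + q * t + b) / (1 + K * (x ^ 2 + t ^ 2)))).
  { intro t; unfold over_confac; now rewrite confac_pair. }
  auto_derive; [exact Hc | field; exact Hc].
Qed.

Lemma partials_at_over_confac (K p q b : R) (z : C) : confac K z <> 0 ->
  partials_at (fun w => RtoC (over_confac K p q b w)) z.
Proof.
  destruct z as [x y]; intro Hc; split; apply ex_derive_C_RtoC; eexists.
  - exact (is_derive_over_confac_x K p q b x y Hc).
  - exact (is_derive_over_confac_y K p q b x y Hc).
Qed.

Lemma px_over_confac (K p q b x y : R) (c := confac K (x, y)) : c <> 0 ->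
  px (fun w => RtoC (over_confac K p q b w)) (x, y) =
  RtoC ((p * c - (p * x + q * y + b) * (2 * K * x)) / c ^ 2).
Proof.
  intro Hc; unfold c; rewrite <- (is_derive_unique _ _ _ (is_derive_over_confac_x K p q b x y Hc)).
  apply Derive_C_RtoC.
Qed.

Lemma py_over_confac (K p q b x y : R) (c := confac K (x, y)) : c <> 0 ->
  py (fun w => RtoC (over_confac K p q b w)) (x, y) =
  RtoC ((q * c - (p * x + q * y + b) * (2 * K * y)) / c ^ 2).
Proof.
  intro Hc; unfold c; rewrite <- (is_derive_unique _ _ _ (is_derive_over_confac_y K p q b x y Hc)).
  apply Derive_C_RtoC.
Qed.

Lemma coframe_dx (K : R) (w : C) : fdx (coframe K) w = RtoC (over_confac K 0 0 2 w).
Proof.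
  unfold coframe, over_confac; simpl.
  apply injective_projections; simpl; unfold Rdiv; ring.
Qed.

Lemma coframe_dy (K : R) (w : C) : fdy (coframe K) w = (Ci * RtoC (over_confac K 0 0 2 w))%C.
Proof.
  unfold coframe, over_confac; simpl.
  apply injective_projections; simpl; unfold Rdiv; ring.
Qed.

Lemma spin_dx (K : R) (w : C) : fdx (spin K) w = RtoC (over_confac K 0 (-2 * K) 0 w).
Proof.
  unfold spin, over_confac, Cdiv; simpl; rewrite Cinv_RtoC.
  apply injective_projections; simpl; unfold Rdiv, Re, Im; ring.
Qed.

Lemma spin_dy (K : R) (w : C) : fdy (spin K) w = RtoC (over_confac K (2 * K) 0 0 w).
Proof.
  unfold spin, over_confac, Cdiv; simpl; rewrite Cinv_RtoC.
  apply injective_projections; simpl; unfold Rdiv, Re, Im; ring.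
Qed.

Lemma coframe_partials (K : R) (z : C) : confac K z <> 0 -> form_partials_at (coframe K) z.
Proof.
  intro Hc; split.
  - apply (partials_at_ext _ _ _ (fun w => eq_sym (coframe_dx K w))).
    exact (partials_at_over_confac _ _ _ _ _ Hc).
  - apply (partials_at_ext _ _ _ (fun w => eq_sym (coframe_dy K w))).
    apply partials_at_mult; [apply partials_at_const |].
    exact (partials_at_over_confac _ _ _ _ _ Hc).
Qed.

Lemma spin_partials (K : R) (z : C) : confac K z <> 0 -> form_partials_at (spin K) z.
Proof.
  intro Hc; split.
  - apply (partials_at_ext _ _ _ (fun w => eq_sym (spin_dx K w))).
    exact (partials_at_over_confac _ _ _ _ _ Hc).
  - apply (partials_at_ext _ _ _ (fun w => eq_sym (spin_dy K w))).
    exact (partials_at_over_confac _ _ _ _ _ Hc).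
Qed.

(* Cartan's structure equations of the metric [4 |dz|^2 / (1 + K |z|^2)^2]. *)
Lemma d1_coframe (K : R) (z : C) : confac K z <> 0 ->
  Defs.d1 (coframe K) z = (Ci * wedge (spin K) (coframe K) z)%C.
Proof.
  destruct z as [x y]; intro Hc; unfold Defs.d1, wedge.
  rewrite (px_ext _ _ _ (coframe_dy K)), (py_ext _ _ _ (coframe_dx K)).
  rewrite px_scal_Ci, px_over_confac, py_over_confac by exact Hc.
  rewrite coframe_dx, coframe_dy, spin_dx, spin_dy.
  unfold over_confac; rewrite confac_pair in *; simpl Re; simpl Im.
  apply injective_projections; simpl; field; contradict Hc; nra.
Qed.

Lemma d1_spin (K : R) (z : C) : confac K z <> 0 ->
  Defs.d1 (spin K) z = (RtoC K * kahler K z)%C.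
Proof.
  destruct z as [x y]; intro Hc; unfold Defs.d1, kahler, wedge.
  rewrite (px_ext _ _ _ (spin_dy K)), (py_ext _ _ _ (spin_dx K)).
  rewrite px_over_confac, py_over_confac by exact Hc.
  cbn [fdx fdy cconj]; rewrite !coframe_dx, !coframe_dy.
  unfold over_confac; rewrite confac_pair in *; simpl Re; simpl Im.
  apply injective_projections; simpl; field; contradict Hc; nra.
Qed.

Definition conn (l : R) (A E : cform) : mform :=
  madd (ftimesM (copp A) (t0 l))
       (mscal (Ci / 2)%C (msub (ftimesM E (tminus l)) (ftimesM (cconj E) (tplus l)))).

(* The constant factors are real or purely imaginary, so that partial derivatives pass
   through them without differentiability hypotheses (see [pxM_conn_matrix]). *)
Definition conn_matrix (l : R) (alpha eps : C) : M2 :=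
  mkM2 (Ci * (RtoC (/ 2) * alpha)) (RtoC (l / 2) * Cconj eps)
       (RtoC (/ 2) * eps) (Ci * (RtoC (- / 2) * alpha)).

Definition curv (B : mform) (z : C) : M2 := M2add (dM B z) (wedgeM B B z).

Ltac M2_componentwise :=
  repeat match goal with c : C |- _ => destruct c end;
  unfold conn_matrix, t0, tminus, tplus, t1, t2, M2sub, M2opp, M2add, M2scal, M2mul;
  cbn [m11 m12 m21 m22]; f_equal; apply injective_projections; simpl; field.

Lemma conn_matrix_basis (l : R) (alpha eps : C) :
  M2add (M2scal (- alpha) (t0 l))
        (M2scal (Ci / 2) (M2add (M2scal eps (tminus l))
                                (M2scal (-1) (M2scal (Cconj eps) (tplus l)))))
  = conn_matrix l alpha eps.
Proof. M2_componentwise. Qed.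

Lemma conn_matrix_add (l : R) (alpha eps alpha' eps' : C) :
  M2add (conn_matrix l alpha eps) (conn_matrix l alpha' eps') =
  conn_matrix l (alpha + alpha') (eps + eps').
Proof. M2_componentwise. Qed.

Lemma conn_matrix_sub (l : R) (alpha eps alpha' eps' : C) :
  M2sub (conn_matrix l alpha eps) (conn_matrix l alpha' eps') =
  conn_matrix l (alpha - alpha') (eps - eps').
Proof. M2_componentwise. Qed.

Lemma conn_matrix_lincomb (l r s : R) (alpha eps alpha' eps' : C) :
  M2add (M2scal (RtoC r) (conn_matrix l alpha eps)) (M2scal (RtoC s) (conn_matrix l alpha' eps')) =
  conn_matrix l (alpha * RtoC r + alpha' * RtoC s) (eps * RtoC r + eps' * RtoC s).
Proof. M2_componentwise. Qed.

Lemma conn_matrix_commutator (l a a' : R) (eps eps' : C) :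
  M2sub (M2mul (conn_matrix l a eps) (conn_matrix l a' eps'))
        (M2mul (conn_matrix l a' eps') (conn_matrix l a eps)) =
  conn_matrix l (RtoC l * (Ci / 2 * (eps * Cconj eps' - eps' * Cconj eps)))
                (- (Ci * (RtoC a * eps' - RtoC a' * eps))).
Proof. M2_componentwise. Qed.

Lemma conn_matrix_eq0 (l : R) (alpha eps : C) :
  conn_matrix l alpha eps = M2zero <-> alpha = 0%C /\ eps = 0%C.
Proof.
  destruct alpha as [a1 a2], eps as [e1 e2]; unfold conn_matrix, M2zero; split.
  - intro H.
    pose proof (f_equal (fun M => Re (m11 M)) H); pose proof (f_equal (fun M => Im (m11 M)) H).
    pose proof (f_equal (fun M => Re (m21 M)) H); pose proof (f_equal (fun M => Im (m21 M)) H).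
    simpl in *; split; apply injective_projections; simpl; lra.
  - intros [-> ->]; f_equal; apply injective_projections; simpl; ring.
Qed.

Lemma conn_dx (l : R) (A E : cform) (w : C) :
  fdx (conn l A E) w = conn_matrix l (fdx A w) (fdx E w).
Proof. apply conn_matrix_basis. Qed.

Lemma conn_dy (l : R) (A E : cform) (w : C) :
  fdy (conn l A E) w = conn_matrix l (fdy A w) (fdy E w).
Proof. apply conn_matrix_basis. Qed.

Lemma pxM_conn_matrix (l : R) (alpha eps : C -> C) (z : C) :
  pxM (fun w => conn_matrix l (alpha w) (eps w)) z = conn_matrix l (px alpha z) (px eps z).
Proof.
  unfold pxM, conn_matrix; cbn [m11 m12 m21 m22].
  rewrite (px_scal_Ci (fun w => RtoC (/ 2) * alpha w)%C), (px_scal_R (/ 2) alpha),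
    (px_scal_R (l / 2) (fun w => Cconj (eps w))), px_conj, (px_scal_R (/ 2) eps),
    (px_scal_Ci (fun w => RtoC (- / 2) * alpha w)%C), (px_scal_R (- / 2) alpha).
  reflexivity.
Qed.

Lemma pyM_conn_matrix (l : R) (alpha eps : C -> C) (z : C) :
  pyM (fun w => conn_matrix l (alpha w) (eps w)) z = conn_matrix l (py alpha z) (py eps z).
Proof.
  unfold pyM, conn_matrix; cbn [m11 m12 m21 m22].
  rewrite (py_scal_Ci (fun w => RtoC (/ 2) * alpha w)%C), (py_scal_R (/ 2) alpha),
    (py_scal_R (l / 2) (fun w => Cconj (eps w))), py_conj, (py_scal_R (/ 2) eps),
    (py_scal_Ci (fun w => RtoC (- / 2) * alpha w)%C), (py_scal_R (- / 2) alpha).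
  reflexivity.
Qed.

Lemma curv_ext (B B' : mform) (z : C) :
  (forall w, fdx B w = fdx B' w) -> (forall w, fdy B w = fdy B' w) -> curv B z = curv B' z.
Proof.
  intros Hx Hy; unfold curv, dM, wedgeM.
  now rewrite (pxM_ext _ _ z Hy), (pyM_ext _ _ z Hx), Hx, Hy.
Qed.

Lemma RtoC_Re (c : C) : Im c = 0 -> c = RtoC (Re c).
Proof. destruct c as [a b]; simpl; intros ->; reflexivity. Qed.

(* The reality of [A] is what makes the (1,2) entry λ times the conjugate of the
   (2,1) entry. *)
Lemma curv_conn (l : R) (A E : cform) (z : C) :
  Im (fdx A z) = 0 -> Im (fdy A z) = 0 ->
  curv (conn l A E) z =
  conn_matrix l (Defs.d1 A z + RtoC l * (Ci / 2 * wedge E (cconj E) z))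
                (Defs.d1 E z - Ci * wedge A E z).
Proof.
  intros HAx HAy; unfold curv, dM, wedgeM.
  rewrite (pxM_ext _ _ z (conn_dy l A E)), (pyM_ext _ _ z (conn_dx l A E)),
    pxM_conn_matrix, pyM_conn_matrix, conn_matrix_sub, !conn_dx, !conn_dy.
  unfold wedge; cbn [fdx fdy cconj].
  rewrite (RtoC_Re (fdx A z) HAx), (RtoC_Re (fdy A z) HAy).
  rewrite conn_matrix_commutator, conn_matrix_add.
  unfold Defs.d1; f_equal; ring.
Qed.

Lemma pullM_conn_dx (f : C -> C) (l : R) (G e : cform) (z : C) :
  fdx (pullM f (conn l G e)) z = conn_matrix l (fdx (pull f G) z) (fdx (pull f e) z).
Proof. unfold pullM; cbn [fdx fdy]; rewrite conn_dx, conn_dy; apply conn_matrix_lincomb. Qed.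

Lemma pullM_conn_dy (f : C -> C) (l : R) (G e : cform) (z : C) :
  fdy (pullM f (conn l G e)) z = conn_matrix l (fdy (pull f G) z) (fdy (pull f e) z).
Proof. unfold pullM; cbn [fdx fdy]; rewrite conn_dx, conn_dy; apply conn_matrix_lincomb. Qed.

Lemma vortex_conn_dx (l0 l : R) (a : cform) (phi : C -> C) (w : C) :
  fdx (vortex_conn l0 l a phi) w =
  fdx (conn l (cadd a (spin (- l0))) (fmul phi (coframe (- l0)))) w.
Proof.
  unfold vortex_conn, conn; cbn [fdx madd ftimesM mscal msub cadd copp fmul cconj].
  now rewrite Cmult_conj.
Qed.

Lemma vortex_conn_dy (l0 l : R) (a : cform) (phi : C -> C) (w : C) :
  fdy (vortex_conn l0 l a phi) w =
  fdy (conn l (cadd a (spin (- l0))) (fmul phi (coframe (- l0)))) w.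
Proof.
  unfold vortex_conn, conn; cbn [fdy madd ftimesM mscal msub cadd copp fmul cconj].
  now rewrite Cmult_conj.
Qed.

Lemma pullM_Ahat (l0 l : R) (U0 : C -> Prop) (f phi : C -> C) (a : cform) :
  cform_eq_on U0 (pull f (coframe (- l))) (fmul phi (coframe (- l0))) ->
  cform_eq_on U0 a (csub (pull f (spin (- l))) (spin (- l0))) ->
  mform_eq_on U0 (pullM f (Ahat l)) (vortex_conn l0 l a phi).
Proof.
  intros He Ha z Hz.
  destruct (He z Hz) as [Hex Hey], (Ha z Hz) as [Hax Hay].
  change (Ahat l) with (conn l (spin (- l)) (coframe (- l))).
  rewrite pullM_conn_dx, pullM_conn_dy, vortex_conn_dx, vortex_conn_dy, conn_dx, conn_dy, Hex, Hey.
  cbn [fdx fdy csub cadd copp] in Hax, Hay |- *.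
  rewrite Hax, Hay; split; f_equal; ring.
Qed.

Lemma curv_vortex_conn (l0 l : R) (phi : C -> C) (ax ay : C -> R) (z : C) :
  confac (- l0) z <> 0 -> partials_at phi z -> form_partials_at (rform ax ay) z ->
  curv (vortex_conn l0 l (rform ax ay) phi) z =
  conn_matrix l
    (Defs.d1 (rform ax ay) z - RtoC (l0 - l * Cmod (phi z) ^ 2) * kahler (- l0) z)%C
    (wedge (csub (dfun phi) (fmul (fun w => (Ci * phi w)%C) (rform ax ay))) (coframe (- l0)) z).
Proof.
  intros Hc Hphi Ha.
  rewrite (curv_ext _ _ z (vortex_conn_dx l0 l _ phi) (vortex_conn_dy l0 l _ phi)).
  rewrite curv_conn by (cbn [fdx fdy cadd rform]; rewrite ?spin_dx, ?spin_dy; simpl; ring).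
  rewrite d1_cadd, d1_spin, d1_fmul, d1_coframe by auto using spin_partials, coframe_partials.
  rewrite RtoC_minus, RtoC_mult, Cmod2_conj, RtoC_opp.
  unfold kahler, wedge; cbn [fdx fdy cadd csub copp fmul cconj dfun rform].
  rewrite !Cmult_conj.
  f_equal; ring.
Qed.

Lemma vortex_conn_flat_at (l0 l : R) (phi : C -> C) (ax ay : C -> R) (z : C) :
  confac (- l0) z <> 0 -> partials_at phi z -> form_partials_at (rform ax ay) z ->
  curv (vortex_conn l0 l (rform ax ay) phi) z = M2zero <->
  wedge (csub (dfun phi) (fmul (fun w => (Ci * phi w)%C) (rform ax ay))) (coframe (- l0)) z = 0%C /\
  Defs.d1 (rform ax ay) z = (RtoC (l0 - l * Cmod (phi z) ^ 2) * kahler (- l0) z)%C.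
Proof.
  intros Hc Hphi Ha.
  rewrite curv_vortex_conn, conn_matrix_eq0, <- Ceq_minus by assumption.
  tauto.
Qed.

Theorem corollary3p2 :
  forall (l0 l : R), unit_val l0 -> unit_val l ->
  forall (U0 U : C -> Prop),
    open U0 -> (forall z, U0 z -> 0 < confac (- l0) z) ->
    open U -> (forall w, U w -> 0 < confac (- l) w) ->
  (* part 1: pullback of A-hat *)
  (forall (f : C -> C), holomorphic_on U0 f -> (forall z, U0 z -> U (f z)) ->
   forall (phi : C -> C) (a : cform),
     cform_eq_on U0 (pull f (coframe (- l))) (fmul phi (coframe (- l0))) ->
     cform_eq_on U0 a (csub (pull f (spin (- l))) (spin (- l0))) ->
     mform_eq_on U0 (pullM f (Ahat l)) (vortex_conn l0 l a phi))
  /\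
  (* part 2: flatness <-> vortex equations *)
  (forall (phi : C -> C) (ax ay : C -> R),
     has_partials_on U0 phi ->
     has_partials_on U0 (fun z => RtoC (ax z)) ->
     has_partials_on U0 (fun z => RtoC (ay z)) ->
     (flat_on U0 (vortex_conn l0 l (rform ax ay) phi) <->
      vortex_eqs U0 l0 l phi (rform ax ay))).
Proof.
  intros l0 l _ _ U0 U _ Hc0 _ _; split.
  - intros f _ _; exact (pullM_Ahat l0 l U0 f).
  - intros phi ax ay Hphi Hax Hay.
    assert (Hreg : forall z, U0 z -> confac (- l0) z <> 0 /\ partials_at phi z /\
                                     form_partials_at (rform ax ay) z).
    { intros z Hz; split; [|split].
      - exact (Rgt_not_eq _ _ (Hc0 z Hz)).
      - exact (has_partials_on_at _ _ _ Hphi Hz).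
      - split; apply (has_partials_on_at U0); assumption. }
    split; intros H z Hz; destruct (Hreg z Hz) as (Hc & Hp & Ha);
      apply (vortex_conn_flat_at l0 l phi ax ay z Hc Hp Ha); exact (H z Hz).
Qed.
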